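(* Let $\mathcal I$ index a finite set of strategies for the iterated Prisoner's Dilemma. Suppose that the strategy indexed by $i^*\in\mathcal I$ consists of a good memory-one strategy vector $\mathbf p^{i^*}$ together with initial cooperation, and that for no other $j\in\mathcal I$ is the strategy vector $\mathbf p^j$ agreeable. Then $i^*$ is an evolutionarily stable strategy for the game $\{A_{ij}:i,j\in\mathcal I\}$, and the vertex $v(i^* )$ is an attractor (a locally asymptotically stable equilibrium) of the replicator dynamics.
   Context: Iterated Prisoner's Dilemma: payoffs $T>R>P>S$ with $2R>T+S$; outcomes ordered $cc,cd,dc,dd$ (first letter X's play, second Y's; $c$ = cooperate, $d$ = defect); payoff vectors $\mathbf S_X=(R,S,T,P)$, $\mathbf S_Y=(R,T,S,P)$. A memory-one strategy vector is $\mathbf p\in[0,1]^4$, $p_i$ being the probability of playing $c$ after the $i$-th outcome, where outcomes are labeled from the player's own perspective (own play first); it is agreeable if $p_1=1$. A strategy is such a vector together with an initial play (probability of $c$ in round one). For a strategy pattern of the opponent (any possibly random, history-dependent rule), a limit distribution is a limit point $\mathbf v$ of the Cesàro averages of the round-$n$ outcome distributions, with payoffs $s_X=\langle\mathbf v\cdot\mathbf S_X\rangle$, $s_Y=\langle\mathbf v\cdot\mathbf S_Y\rangle$. A memory-one $\mathbf p$ for X is good if it is agreeable and for every strategy pattern of Y and every associated limit distribution $s_Y\ge R$ implies $s_Y=s_X=R$. For $i,j\in\mathcal I$, $A_{ij}$ is the long-run average payoff $s_X$ of X when X uses strategy $i$ and Y uses strategy $j$ (the Cesàro limit exists). Replicator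 dynamics: on the simplex $\Delta=\{\pi\in\mathbb R^{\mathcal I}:\pi_i\ge0,\sum\pi_i=1\}$, $\frac{d\pi_i}{dt}=\pi_i(A_{i\pi}-A_{\pi\pi})$ with $A_{i\pi}=\sum_j\pi_jA_{ij}$, $A_{\pi\pi}=\sum_i\pi_iA_{i\pi}$; $v(i)$ is the vertex with $\pi_i=1$. $i^*$ is an evolutionarily stable strategy (ESS) if $A_{ji^*}<A_{i^*i^*}$ for all $j\neq i^*$. *)

From mathcomp Require Import all_boot all_order all_algebra.
From mathcomp Require Import all_classical all_reals all_analysis.
Set Implicit Arguments. Unset Strict Implicit. Unset Printing Implicit Defensive.
Import Order.TTheory GRing.Theory Num.Theory.
Import numFieldNormedType.Exports.
Local Open Scope ring_scope.

(* An outcome of one round: (X's play, Y's play), true = c, false = d.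
   Ordering cc, cd, dc, dd = (true,true), (true,false), (false,true), (false,false). *)
Definition outcome := (bool * bool)%type.

Section IPD.
Variable R : realType.

(* Payoff vectors S_X = (R,S,T,P), S_Y = (R,T,S,P); Rw is the reward R. *)
Definition SX (T Rw P S : R) (o : outcome) : R :=
  match o with
  | (true, true) => Rw | (true, false) => S | (false, true) => T | (false, false) => P
  end.
Definition SY (T Rw P S : R) (o : outcome) : R :=
  match o with
  | (true, true) => Rw | (true, false) => T | (false, true) => S | (false, false) => P
  end.

Definition is_PD (T Rw P S : R) : Prop :=
  [/\ S < P, P < Rw, Rw < T & T + S < 2 * Rw].

(* A memory-one strategy vector p : outcome -> R; p o is the probability of
   playing c after outcome o, o labelled from the player's own perspective
   (own play first). p1 = p (true,true), ..., p4 = p (false,false). *)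
Definition mem1_vec (p : outcome -> R) : Prop := forall o, 0 <= p o <= 1.
Definition prob (x : R) : Prop := 0 <= x <= 1.
Definition agreeable (p : outcome -> R) : Prop := p (true, true) = 1.

(* A strategy pattern for Y (behaviour rule, possibly random and
   history-dependent): given the history of outcomes so far (chronological,
   each outcome written (X's play, Y's play)), the probability that Y plays c. *)
Definition pattern_valid (b : seq outcome -> R) : Prop := forall h, 0 <= b h <= 1.

Definition pr_out (a c : R) (o : outcome) : R :=
  (if o.1 then a else 1 - a) * (if o.2 then c else 1 - c).

Definition xprob (p : outcome -> R) (x0 : R) (h : seq outcome) : R :=
  if h is [::] then x0 else p (last (true, true) h).

Definition hist_prob (p : outcome -> R) (x0 : R) (b : seq outcome -> R)
  (h : seq outcome) : R :=
  \prod_(k < size h) pr_out (xprob p x0 (take k h)) (b (take k h)) (nth (true, true) h k).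

Definition round_dist (p : outcome -> R) (x0 : R) (b : seq outcome -> R)
  (n : nat) (o : outcome) : R :=
  \sum_(h : n.-tuple outcome)
     hist_prob p x0 b h * pr_out (xprob p x0 h) (b h) o.

Definition cesaro (p : outcome -> R) (x0 : R) (b : seq outcome -> R)
  (n : nat) (o : outcome) : R :=
  (n.+1%:R)^-1 * \sum_(k < n.+1) round_dist p x0 b k o.

Definition limit_dist (p : outcome -> R) (x0 : R) (b : seq outcome -> R)
  (v : outcome -> R) : Prop :=
  forall e : R, 0 < e -> forall N : nat, exists n : nat,
    (N <= n)%N /\ forall o, `|cesaro p x0 b n o - v o| < e.

Definition sXv (T Rw P S : R) (v : outcome -> R) : R := \sum_o v o * SX T Rw P S o.
Definition sYv (T Rw P S : R) (v : outcome -> R) : R := \sum_o v o * SY T Rw P S o.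

Definition good (T Rw P S : R) (p : outcome -> R) : Prop :=
  agreeable p /\
  forall (x0 : R) (b : seq outcome -> R) (v : outcome -> R),
    prob x0 -> pattern_valid b -> limit_dist p x0 b v ->
    Rw <= sYv T Rw P S v -> sYv T Rw P S v = Rw /\ sXv T Rw P S v = Rw.

(* Y playing the memory-one strategy (q, y0): Y labels outcomes own play first. *)
Definition swap_out (o : outcome) : outcome := (o.2, o.1).
Definition mem1_pattern (q : outcome -> R) (y0 : R) : seq outcome -> R :=
  fun h => if h is [::] then y0 else q (swap_out (last (true, true) h)).

Definition payoff_matrix (I : finType) (T Rw P S : R)
  (p : I -> outcome -> R) (x0 : I -> R) (i j : I) : R :=
  limn (fun n => sXv T Rw P S (cesaro (p i) (x0 i) (mem1_pattern (p j) (x0 j)) n)).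

Definition ESS (I : finType) (A : I -> I -> R) (istar : I) : Prop :=
  forall j, j != istar -> A j istar < A istar istar.

Definition repl_field (I : finType) (A : I -> I -> R) (pi : I -> R) (i : I) : R :=
  pi i * (\sum_j pi j * A i j - \sum_k pi k * (\sum_j pi j * A k j)).

Definition in_simplex (I : finType) (pi : I -> R) : Prop :=
  (forall i, 0 <= pi i) /\ \sum_i pi i = 1.

Definition vertex (I : finType) (istar : I) : I -> R :=
  fun i => if i == istar then 1 else 0.

Definition repl_solution (I : finType) (A : I -> I -> R) (sol : R -> I -> R) : Prop :=
  forall (t : R) (i : I), is_derive t 1 (fun s => sol s i) (repl_field A (sol t) i).

Definition attractor (I : finType) (A : I -> I -> R) (v : I -> R) : Prop :=
  [/\ in_simplex v,
      (forall i, repl_field A v i = 0),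
      (forall e : R, 0 < e -> exists d : R, 0 < d /\
         forall sol, repl_solution A sol -> in_simplex (sol 0) ->
           (forall i, `|sol 0 i - v i| < d) ->
           forall t, 0 <= t -> forall i, `|sol t i - v i| < e)
    & (exists d : R, 0 < d /\
         forall sol, repl_solution A sol -> in_simplex (sol 0) ->
           (forall i, `|sol 0 i - v i| < d) ->
           forall i (e : R), 0 < e -> exists M : R, forall t, M <= t ->
             `|sol t i - v i| < e)].

End IPD.

(* A good agreeable strategy that opens with cooperation locks into mutual cooperation
   against itself, so [A istar istar = R].  Two memory-one strategies generate a finite
   Markov chain on the outcomes, whose Cesaro averages converge to a stationary
   distribution [v], and [A j istar] is Y's payoff under the limit [v] of the play of
   [istar] against [j].  If it were at least [R], goodness of [p istar] would force both
   payoffs to equal [R], which (as [2 R > T + S] and [R > P]) concentrates [v] on [cc];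
   stationarity at [cc] then says that [p j] is agreeable.  Hence [istar] is an ESS.
   Near the vertex, the ESS gap [c] makes the growth rate of every other strategy at
   most [- c / 2], so its squared share decays like [exp (- c t)], while a Gronwall
   argument keeps the total mass equal to 1; continuous induction keeps the orbit near
   the vertex, which gives both stability and attraction. *)

From mathcomp Require Import all_boot all_order all_algebra.
From mathcomp Require Import all_classical all_reals all_analysis.
From mathcomp Require Import ring lra zify.
Set Implicit Arguments. Unset Strict Implicit. Unset Printing Implicit Defensive.
Import Order.TTheory GRing.Theory Num.Theory.
Import numFieldNormedType.Exports.
Local Open Scope classical_set_scope.
Local Open Scope ring_scope.

Lemma big_tuple_rcons (V : nmodType) (T : finType) n (F : n.+1.-tuple T -> V) :
  \sum_(h : n.+1.-tuple T) F h = \sum_(h : n.-tuple T) \sum_(o : T) F [tuple of rcons h o].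
Proof.
rewrite pair_big /=.
pose split_last (t : n.+1.-tuple T) : n.-tuple T * T :=
  ([tuple of belast (thead t) (behead t)], last (thead t) (behead t)).
rewrite (reindex (fun x : n.-tuple T * T => [tuple of rcons x.1 x.2])) //=.
exists split_last => [[h o]|t] _.
  rewrite /split_last; case: h => [[|x s] /= sz]; congr pair; try by apply: val_inj.
    by apply: val_inj; rewrite /= /thead (tnth_nth x) /= belast_rcons.
  by rewrite /thead (tnth_nth x) /= last_rcons.
by apply: val_inj; rewrite /= [in RHS](tuple_eta t) /= -lastI.
Qed.

Lemma swap_outK : involutive swap_out.
Proof. by case. Qed.

Section MemoryOneChain.
Variable R : realType.
Implicit Types (p q : outcome -> R) (a c : R) (b : seq outcome -> R).

Lemma sum_outcome (F : outcome -> R) :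
  \sum_o F o = F (true, true) + F (true, false) + F (false, true) + F (false, false).
Proof.
rewrite (eq_bigr (fun o => F (o.1, o.2))); last by case.
by rewrite -(pair_big xpredT xpredT (fun x y => F (x, y))) /= !big_bool /= addrA.
Qed.

Lemma pr_out_ge0 a c o : prob a -> prob c -> 0 <= pr_out a c o.
Proof.
move=> /andP[a0 a1] /andP[c0 c1].
by apply: mulr_ge0; case: ifP => _; rewrite ?subr_ge0.
Qed.

Lemma pr_out_sum1 a c : \sum_o pr_out a c o = 1.
Proof. by rewrite sum_outcome /pr_out /=; ring. Qed.

Lemma pr_out_swap a c o : pr_out a c (swap_out o) = pr_out c a o.
Proof. exact: mulrC. Qed.

Lemma hist_prob_rcons p (x0 : R) b h o :
  hist_prob p x0 b (rcons h o) = hist_prob p x0 b h * pr_out (xprob p x0 h) (b h) o.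
Proof.
rewrite /hist_prob size_rcons big_ord_recr /= -cats1 take_size_cat // nth_cat ltnn subnn.
congr (_ * _); apply: eq_bigr => i _.
by rewrite takel_cat ?nth_cat ?ltn_ord // ltnW.
Qed.

Lemma xprob_rcons p (x0 : R) h o : xprob p x0 (rcons h o) = p o.
Proof. by case: h => //= x s; rewrite last_rcons. Qed.

Lemma mem1_pattern_rcons q (y0 : R) h o : mem1_pattern q y0 (rcons h o) = q (swap_out o).
Proof. by case: h => //= x s; rewrite last_rcons. Qed.

(* Y labels outcomes with its own play first, hence the [swap_out]. *)
Definition mem1_trans p q (o o' : outcome) : R := pr_out (p o) (q (swap_out o)) o'.

Fixpoint mem1_dist p (x0 : R) q (y0 : R) n : outcome -> R :=
  if n is n'.+1 then fun o' => \sum_o mem1_dist p x0 q y0 n' o * mem1_trans p q o o'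
  else pr_out x0 y0.

Lemma round_dist_mem1 p (x0 : R) q (y0 : R) n o :
  round_dist p x0 (mem1_pattern q y0) n o = mem1_dist p x0 q y0 n o.
Proof.
elim: n o => [|n IHn] o.
  rewrite /round_dist (big_pred1 [tuple]) => [|t]; last by apply/esym/eqP/val_inj; case: t => -[].
  by rewrite /hist_prob big_ord0 mul1r.
rewrite /= /round_dist big_tuple_rcons exchange_big /=; apply: eq_bigr => o1 _.
rewrite -IHn mulr_suml; apply: eq_bigr => h _.
by rewrite xprob_rcons mem1_pattern_rcons hist_prob_rcons.
Qed.

Lemma mem1_dist_swap p (x0 : R) q (y0 : R) n o :
  mem1_dist p x0 q y0 n o = mem1_dist q y0 p x0 n (swap_out o).
Proof.
elim: n o => [|n IHn] o /=; first by rewrite pr_out_swap.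
rewrite [RHS](reindex_inj (inv_inj swap_outK)); apply: eq_bigr => o1 _.
by rewrite IHn /mem1_trans swap_outK pr_out_swap.
Qed.

Lemma mem1_dist_agreeable p n o : agreeable p ->
  mem1_dist p 1 p 1 n o = (o == (true, true))%:R.
Proof.
have cc_forever o' : pr_out 1 1 o' = (o' == (true, true))%:R.
  by case: o' => [[] []]; rewrite /pr_out /= ?subrr ?mulr0 ?mul0r ?mulr1.
move=> p1; elim: n o => [|n IHn] o /=; first exact: cc_forever.
rewrite (bigD1 (true, true)) //= big1 => [|o1 /negbTE o1cc]; last by rewrite IHn o1cc mul0r.
by rewrite IHn eqxx mul1r addr0 /mem1_trans /= p1 cc_forever.
Qed.

Section Stochastic.
Variables (p q : outcome -> R) (x0 y0 : R).
Hypotheses (p_prob : mem1_vec p) (q_prob : mem1_vec q) (x0_prob : prob x0) (y0_prob : prob y0).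

Lemma mem1_trans_ge0 o o' : 0 <= mem1_trans p q o o'.
Proof. exact: pr_out_ge0 (p_prob _) (q_prob _). Qed.

Lemma mem1_dist_ge0 n o : 0 <= mem1_dist p x0 q y0 n o.
Proof.
elim: n o => [|n IHn] o /=; first exact: pr_out_ge0 x0_prob y0_prob.
by apply: sumr_ge0 => o1 _; rewrite mulr_ge0 ?mem1_trans_ge0.
Qed.

Lemma mem1_dist_sum1 n : \sum_o mem1_dist p x0 q y0 n o = 1.
Proof.
elim: n => [|n IHn] /=; first exact: pr_out_sum1.
rewrite exchange_big /= -[RHS]IHn; apply: eq_bigr => o _.
by rewrite -mulr_sumr pr_out_sum1 mulr1.
Qed.

End Stochastic.
End MemoryOneChain.

Section StochasticCesaro.
Variables (R : realType) (n : nat) (M : 'M[R]_n).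
Hypothesis M_ge0 : forall i j, 0 <= M i j.
Hypothesis M_sum1 : forall i, \sum_j M i j = 1.

Definition mxpowr k m (Y : 'M[R]_(m, n)) := iter k (mulmxr M) Y.

Lemma mxpowrS k m (Y : 'M[R]_(m, n)) : mxpowr k.+1 Y = mxpowr k Y *m M.
Proof. by []. Qed.

Arguments mxpowr : simpl never.

Lemma mxpowrSr k m (Y : 'M[R]_(m, n)) : mxpowr k.+1 Y = mxpowr k (Y *m M).
Proof. by elim: k => [//|k IHk]; rewrite mxpowrS IHk. Qed.

Lemma mxpowrD k m (Y Z : 'M[R]_(m, n)) : mxpowr k (Y + Z) = mxpowr k Y + mxpowr k Z.
Proof. by elim: k => [//|k IHk]; rewrite !mxpowrS IHk mulmxDl. Qed.

Lemma mxpowrB k m (Y Z : 'M[R]_(m, n)) : mxpowr k (Y - Z) = mxpowr k Y - mxpowr k Z.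
Proof. by elim: k => [//|k IHk]; rewrite !mxpowrS IHk mulmxBl. Qed.

Lemma mxpowr_fixed k m (Y : 'M[R]_(m, n)) : Y *m M = Y -> mxpowr k Y = Y.
Proof. by move=> YM; elim: k => [//|k IHk]; rewrite mxpowrS IHk YM. Qed.

Lemma mxpowr_row_norm k m (Y : 'M[R]_(m, n)) i :
  \sum_j `|mxpowr k Y i j| <= \sum_j `|Y i j|.
Proof.
elim: k => [//|k IHk]; rewrite mxpowrS; apply: le_trans IHk.
under eq_bigr do rewrite mxE.
apply: (@le_trans _ _ (\sum_j \sum_l `|mxpowr k Y i l| * M l j)).
  apply: ler_sum => j _; apply: le_trans (ler_norm_sum _ _ _) _.
  by apply: ler_sum => l _; rewrite normrM (ger0_norm (M_ge0 _ _)).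
by rewrite exchange_big; apply: ler_sum => l _; rewrite -mulr_sumr M_sum1 mulr1.
Qed.

Lemma mxpowr_bound k m (Y : 'M[R]_(m, n)) i j : `|mxpowr k Y i j| <= \sum_l `|Y i l|.
Proof.
apply: le_trans (mxpowr_row_norm k Y i).
by rewrite (bigD1 j) //= lerDl sumr_ge0.
Qed.

(* Right multiplication by [M] does not increase row l1-norms, whereas [D M^k = D + k X]. *)
Lemma fixed_in_range_eq0 (X D : 'M[R]_n) : X *m M = X -> D *m M = D + X -> X = 0.
Proof.
move=> XM DM.
have DMk k : mxpowr k D = D + k%:R *: X.
  elim: k => [|k IHk]; first by rewrite scale0r addr0.
  rewrite mxpowrS IHk mulmxDl -scalemxAl XM DM -addrA; congr (_ + _).
  by rewrite -natr1 scalerDl scale1r addrC.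
apply/matrixP => i j; rewrite mxE; apply/eqP/negPn/negP => Xij_neq0.
set C := \sum_l `|D i l| + `|D i j|.
have kX_le k : k%:R * `|X i j| <= C.
  have := mxpowr_bound k D i j; rewrite DMk !mxE => DkX_le.
  have -> : k%:R * `|X i j| = `|(D i j + k%:R * X i j) - D i j|.
    by rewrite addrC addKr normrM normr_nat.
  by apply: le_trans (ler_normB _ _) _; rewrite lerD2r.
have X_gt0 : 0 < `|X i j| by rewrite normr_gt0.
have := kX_le (Num.bound (C / `|X i j|)).
rewrite -ler_pdivlMr // leNgt => /negP; apply; apply: archi_boundP.
by rewrite divr_ge0 // (le_trans _ (kX_le 0%N)) // mul0r.
Qed.

Lemma stochastic_decomposition (mu : 'rV[R]_n) :
  exists a y : 'rV[R]_n, mu = a + (y *m M - y) /\ a *m M = a.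
Proof.
set B := M - 1%:M.
have BE m (Y : 'M[R]_(m, n)) : Y *m B = Y *m M - Y by rewrite mulmxBr mulmx1.
have ker_cap_img : (kermx B :&: B)%MS = 0.
  have /sub_kermxP := capmxSl (kermx B) B; rewrite BE => /eqP; rewrite subr_eq0 => /eqP XM.
  have /submxP[D DB] := capmxSr (kermx B) B.
  by apply: (fixed_in_range_eq0 (D := D) XM); rewrite DB BE addrCA subrr addr0.
have ker_img_full : row_full (kermx B + B)%MS.
  apply/eqP; have := mxrank_sum_cap (kermx B) B.
  by rewrite ker_cap_img mxrank0 addn0 mxrank_ker => ->; rewrite subnK // rank_leq_row.
have /sub_addsmxP[[u1 u2] /= ->] := submx_full mu ker_img_full.
exists (u1 *m kermx B), u2; split; first by rewrite BE.
by apply/eqP; rewrite -subr_eq0 -BE -mulmxA mulmx_ker mulmx0.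
Qed.

Definition mx_cesaro k (mu : 'rV[R]_n) : 'rV[R]_n :=
  (k.+1%:R)^-1 *: \sum_(i < k.+1) mxpowr i mu.

Lemma mx_cesaro_cvg (mu : 'rV[R]_n) :
  exists2 a : 'rV[R]_n, a *m M = a & forall j, (mx_cesaro k mu 0 j @[k --> \oo] --> a 0 j).
Proof.
have [a [y [mu_eq aM]]] := stochastic_decomposition mu.
exists a => // j.
(* The fixed part is its own average; the coboundary part telescopes to [O(1/k)]. *)
have telescope k :
    \sum_(i < k.+1) mxpowr i mu = k.+1%:R *: a + (mxpowr k.+1 y - y).
  elim: k => [|k IHk]; first by rewrite big_ord1 scale1r mu_eq.
  rewrite big_ord_recr /= IHk mu_eq mxpowrD (mxpowr_fixed _ aM) mxpowrB -mxpowrSr.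
  move: (mxpowr k.+1 y) (mxpowr k.+2 y) => Y1 Y2.
  by apply/matrixP => i l; rewrite !mxE mulrS; ring.
set C := \sum_l `|y 0 l| + `|y 0 j| + 1.
have C_gt0 : 0 < C by rewrite ltr_pwDr // addr_ge0 // sumr_ge0.
apply/subr_cvg0/cvgr0Pnorm_lt => e e_gt0.
apply: filterS (cvgr0_norm_lt _ cvg_harmonic _ (divr_gt0 e_gt0 C_gt0)) => k.
rewrite ger0_norm ?harmonic_ge0 // /mx_cesaro telescope scalerDr scalerA.
rewrite mulVf ?pnatr_eq0 // scale1r /=.
move: (mxpowr k.+1 y) (mxpowr_bound k.+1 y 0 j) => Yk Yk_le.
rewrite !mxE addrAC subrr add0r normrM normfV normr_nat => hk.
apply: (@le_lt_trans _ _ (k.+1%:R^-1 * C)); last by rewrite -ltr_pdivlMr.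
rewrite ler_pM2l ?invr_gt0 ?ltr0n // /C -addrA.
by apply: le_trans (ler_normB _ _) _; rewrite lerD ?lerDl.
Qed.

End StochasticCesaro.

Section FiniteLimits.
Variables (R : realType) (T : finType).

Lemma cvg_sum_fin (u : nat -> T -> R) (v : T -> R) :
  (forall t, u n t @[n --> \oo] --> v t) ->
  (\sum_t u n t @[n --> \oo] --> \sum_t v t).
Proof. by move=> uv; apply: cvg_big => //; exact: add_continuous. Qed.

Lemma cvg_sum_weighted (u : nat -> T -> R) (v w : T -> R) :
  (forall t, u n t @[n --> \oo] --> v t) ->
  (\sum_t u n t * w t @[n --> \oo] --> \sum_t v t * w t).
Proof. by move=> uv; apply: cvg_sum_fin => t; apply: cvgM => //; exact: cvg_cst. Qed.

Lemma cvg_distribution (u : nat -> T -> R) (v : T -> R) :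
  (forall n t, 0 <= u n t) -> (forall n, \sum_t u n t = 1) ->
  (forall t, u n t @[n --> \oo] --> v t) ->
  (forall t, 0 <= v t) /\ \sum_t v t = 1.
Proof.
move=> u_ge0 u_sum1 uv; split=> [t|].
  by apply: (cvgr_to_ge (uv t)); apply: nearW.
have sum_cvg1 : (\sum_t u n t @[n --> \oo] --> (1 : R)).
  by under eq_cvg do rewrite u_sum1; exact: cvg_cst.
exact: (cvg_unique _ (cvg_sum_fin uv) sum_cvg1).
Qed.

End FiniteLimits.

Section MemoryOneLongRun.
Variable R : realType.

Lemma big_enum_val (T : finType) (F : T -> R) :
  \sum_(i < #|{: T}|) F (enum_val i) = \sum_t F t.
Proof. by rewrite [RHS](reindex _ (onW_bij _ (@enum_val_bij T))). Qed.

Lemma cesaro_mem1 (p q : outcome -> R) (x0 y0 : R) n o :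
  cesaro p x0 (mem1_pattern q y0) n o =
  n.+1%:R^-1 * \sum_(k < n.+1) mem1_dist p x0 q y0 k o.
Proof. by rewrite /cesaro; under eq_bigr do rewrite round_dist_mem1. Qed.

Lemma cesaro_mem1_swap (p q : outcome -> R) (x0 y0 : R) n o :
  cesaro p x0 (mem1_pattern q y0) n o = cesaro q y0 (mem1_pattern p x0) n (swap_out o).
Proof. by rewrite !cesaro_mem1; under eq_bigr do rewrite mem1_dist_swap. Qed.

Variables (p q : outcome -> R) (x0 y0 : R).
Hypotheses (p_prob : mem1_vec p) (q_prob : mem1_vec q) (x0_prob : prob x0) (y0_prob : prob y0).

Let M : 'M[R]_#|{: outcome}| := \matrix_(i, j) mem1_trans p q (enum_val i) (enum_val j).
Let mu0 : 'rV[R]_#|{: outcome}| := \row_j pr_out x0 y0 (enum_val j).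

Lemma mem1_dist_mxpowr n o : mem1_dist p x0 q y0 n o = mxpowr M n mu0 0 (enum_rank o).
Proof.
elim: n o => [|n IHn] o; first by rewrite mxE enum_rankK.
rewrite mxpowrS mxE /= -big_enum_val; apply: eq_bigr => i _.
by rewrite IHn enum_valK mxE enum_rankK.
Qed.

Lemma cesaro_mem1_cvg : exists v : outcome -> R,
  [/\ forall o, 0 <= v o, \sum_o v o = 1,
      forall o', \sum_o v o * mem1_trans p q o o' = v o' &
      forall o, (cesaro p x0 (mem1_pattern q y0) n o @[n --> \oo] --> v o)].
Proof.
have M_ge0 i j : 0 <= M i j by rewrite mxE mem1_trans_ge0.
have M_sum1 i : \sum_j M i j = 1.
  by under eq_bigr do rewrite mxE; rewrite (big_enum_val (mem1_trans p q _)) pr_out_sum1.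
have [a aM a_lim] := mx_cesaro_cvg M_ge0 M_sum1 mu0.
pose v o := a 0 (enum_rank o).
have v_lim o : (cesaro p x0 (mem1_pattern q y0) n o @[n --> \oo] --> v o).
  apply: cvg_trans (a_lim (enum_rank o)); apply: near_eq_cvg; apply: nearW => n.
  rewrite cesaro_mem1 /mx_cesaro !mxE summxE; congr (_ * _); apply: eq_bigr => k _.
  by rewrite mem1_dist_mxpowr.
have ces_ge0 n o : 0 <= cesaro p x0 (mem1_pattern q y0) n o.
  by rewrite cesaro_mem1 mulr_ge0 ?invr_ge0 ?sumr_ge0 // => k _; exact: mem1_dist_ge0.
have ces_sum1 n : \sum_o cesaro p x0 (mem1_pattern q y0) n o = 1.
  under eq_bigr do rewrite cesaro_mem1.
  rewrite -mulr_sumr exchange_big /=; under eq_bigr do rewrite mem1_dist_sum1.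
  by rewrite sumr_const card_ord mulVf ?pnatr_eq0.
have [v_ge0 v_sum1] := cvg_distribution ces_ge0 ces_sum1 v_lim.
exists v; split=> // o'.
have := congr1 (fun X : 'rV_#|{: outcome}| => X 0 (enum_rank o')) aM.
rewrite /= mxE -/(v o') => <-; rewrite -big_enum_val.
by apply: eq_bigr => i _; rewrite /v enum_valK mxE enum_rankK.
Qed.

End MemoryOneLongRun.

Lemma mem1_pattern_valid (R : realType) (q : outcome -> R) (y0 : R) :
  mem1_vec q -> prob y0 -> pattern_valid (mem1_pattern q y0).
Proof. by move=> q_prob y0_prob [|o h] /=. Qed.

Lemma cvg_limit_dist (R : realType) (p : outcome -> R) (x0 : R) (b : seq outcome -> R)
    (v : outcome -> R) :
  (forall o, (cesaro p x0 b n o @[n --> \oo] --> v o)) -> limit_dist p x0 b v.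
Proof.
move=> ces_v e e_gt0 N.
have ces_near : \forall n \near \oo, forall o, `|cesaro p x0 b n o - v o| < e.
  apply: filter_forall => o; move/cvgrPdist_lt: (ces_v o) => /(_ e e_gt0).
  by apply: filterS => n; rewrite distrC.
have [n [Nn near_n]] := filter_ex (filterI (nbhs_infty_ge N) ces_near).
by exists n.
Qed.

Section Payoffs.
Variables (R : realType) (T Rw P S : R).
Hypothesis PD : is_PD T Rw P S.

Lemma sXv_swap (v : outcome -> R) : sXv T Rw P S (v \o swap_out) = sYv T Rw P S v.
Proof. by rewrite /sXv /sYv !sum_outcome /=; ring. Qed.

Lemma mutual_reward_point_mass (v : outcome -> R) :
  (forall o, 0 <= v o) -> \sum_o v o = 1 ->
  sXv T Rw P S v = Rw -> sYv T Rw P S v = Rw -> forall o, v o = (o == (true, true))%:R.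
Proof.
case: PD => SP PR RT TS v_ge0; rewrite /sXv /sYv !sum_outcome /= => v_sum sX sY.
have cd_ge0 := v_ge0 (true, false); have dc_ge0 := v_ge0 (false, true).
have dd_ge0 := v_ge0 (false, false).
(* [sX + sY = 2 Rw] only at [cc], since [T + S < 2 Rw] and [P < Rw]. *)
have cd0 : v (true, false) = 0 by nra.
have dc0 : v (false, true) = 0 by nra.
have dd0 : v (false, false) = 0 by nra.
by case=> [[] []] /=; lra.
Qed.

Variables (I : finType) (p : I -> outcome -> R) (x0 : I -> R).
Hypotheses (p_prob : forall i, mem1_vec (p i)) (x0_prob : forall i, prob (x0 i)).
Local Notation A := (payoff_matrix T Rw P S p x0).

Lemma payoff_matrix_cvg i j v :
  (forall o, cesaro (p i) (x0 i) (mem1_pattern (p j) (x0 j)) n o @[n --> \oo] --> v o) ->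
  A i j = sXv T Rw P S v.
Proof. by move=> ces_v; apply: cvg_lim => //; exact: cvg_sum_weighted. Qed.

Lemma payoff_agreeable_self i : agreeable (p i) -> x0 i = 1 -> A i i = Rw.
Proof.
move=> p_agr x0_coop.
have ces_cc n o : cesaro (p i) (x0 i) (mem1_pattern (p i) (x0 i)) n o = (o == (true, true))%:R.
  rewrite cesaro_mem1 x0_coop; under eq_bigr do rewrite mem1_dist_agreeable //.
  by rewrite sumr_const card_ord -[X in _ * X]mulr_natr mulrCA mulVf ?pnatr_eq0 ?mulr1.
rewrite (@payoff_matrix_cvg _ _ (fun o => (o == (true, true))%:R)).
  by rewrite /sXv sum_outcome /= !mul0r !addr0 mul1r.
by move=> o; under eq_cvg do rewrite ces_cc; exact: cvg_cst.
Qed.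

Lemma payoff_against_good j istar : good T Rw P S (p istar) -> x0 istar = 1 ->
  ~ agreeable (p j) -> A j istar < Rw.
Proof.
move=> [pstar_agr pstar_good] x0_coop pj_disagr.
have [v [v_ge0 v_sum1 v_stat ces_v]] :=
  cesaro_mem1_cvg (p_prob istar) (p_prob j) (x0_prob istar) (x0_prob j).
have -> : A j istar = sYv T Rw P S v.
  rewrite -sXv_swap; apply: payoff_matrix_cvg => o.
  by under eq_cvg do rewrite cesaro_mem1_swap; exact: ces_v.
rewrite ltNge; apply/negP => Rw_le.
have [sY sX] := pstar_good _ _ _ (x0_prob istar)
  (mem1_pattern_valid (p_prob j) (x0_prob j)) (cvg_limit_dist ces_v) Rw_le.
have v_cc := mutual_reward_point_mass v_ge0 v_sum1 sX sY.
apply: pj_disagr; have := v_stat (true, true).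
rewrite (bigD1 (true, true)) //= big1 => [|o /negbTE o_cc]; last by rewrite v_cc o_cc mul0r.
by rewrite !v_cc /= mul1r addr0 /mem1_trans /pr_out /= pstar_agr mul1r.
Qed.

End Payoffs.

Section ReplicatorNearVertex.
Variables (R : realType) (I : finType) (A : I -> I -> R) (istar : I).
Local Notation v := (vertex R istar).

Definition fitness (x : I -> R) i := \sum_j x j * A i j.
Definition mean_fitness (x : I -> R) := \sum_k x k * fitness x k.

Lemma repl_fieldE x i : repl_field A x i = x i * (fitness x i - mean_fitness x).
Proof. by []. Qed.

Definition payoff_scale := 1 + \sum_k \sum_j `|A k j|.
Local Notation K := payoff_scale.

Lemma row_abs_sum_le k : \sum_j `|A k j| <= K.
Proof.
apply: (@le_trans _ _ (\sum_k' \sum_j `|A k' j|)); last by rewrite lerDr.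
by rewrite [leRHS](bigD1 k) //= lerDl sumr_ge0 // => *; exact: sumr_ge0.
Qed.

Lemma payoff_scale_gt0 : 0 < K.
Proof. by rewrite ltr_pwDl // sumr_ge0 // => *; exact: sumr_ge0. Qed.

Lemma entry_abs_le k j : `|A k j| <= K.
Proof. by apply: le_trans (row_abs_sum_le k); rewrite (bigD1 j) //= lerDl sumr_ge0. Qed.

Lemma sum_vertex (F : I -> R) : \sum_l v l * F l = F istar.
Proof.
rewrite (bigD1 istar) //= big1 => [|l /negbTE l_ne]; last by rewrite /vertex l_ne mul0r.
by rewrite /vertex eqxx mul1r addr0.
Qed.

Lemma vertex_in_simplex : in_simplex v.
Proof.
split=> [i|]; first by rewrite /vertex; case: ifP.
by rewrite -[RHS](sum_vertex (fun=> 1)); apply: eq_bigr => i _; rewrite mulr1.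
Qed.

Lemma fitness_vertex j : fitness v j = A j istar.
Proof. exact: sum_vertex. Qed.

Lemma mean_fitness_vertex : mean_fitness v = A istar istar.
Proof. by rewrite /mean_fitness sum_vertex fitness_vertex. Qed.

Lemma repl_field_vertex i : repl_field A v i = 0.
Proof.
rewrite repl_fieldE /vertex; case: eqP => [->|_]; last by rewrite mul0r.
by rewrite -/v fitness_vertex mean_fitness_vertex subrr mulr0.
Qed.

Lemma fitness_near x d j : (forall i, `|x i - v i| <= d) ->
  `|fitness x j - A j istar| <= d * K.
Proof.
move=> x_near; have d_ge0 : 0 <= d := le_trans (normr_ge0 _) (x_near istar).
rewrite -fitness_vertex -sumrB; apply: le_trans (ler_norm_sum _ _ _) _.
apply: (@le_trans _ _ (\sum_l d * `|A j l|)).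
  by apply: ler_sum => l _; rewrite -mulrBl normrM ler_wpM2r.
by rewrite -mulr_sumr ler_wpM2l // row_abs_sum_le.
Qed.

Lemma mean_fitness_near x d : d <= 1 -> (forall i, `|x i - v i| <= d) ->
  `|mean_fitness x - A istar istar| <= 3 * d * K.
Proof.
move=> d_le1 x_near; have d_ge0 : 0 <= d := le_trans (normr_ge0 _) (x_near istar).
have vertex_le1 i : `|v i| <= 1 by rewrite /vertex; case: ifP; rewrite ?normr1 ?normr0.
have x_le2 i : `|x i| <= 2.
  by rewrite -(subrK (v i) (x i)); apply: le_trans (ler_normD _ _) _; have := x_near i;
    have := vertex_le1 i; lra.
have quadE y : mean_fitness y = \sum_k \sum_l y k * y l * A k l.
  by apply: eq_bigr => k _; rewrite mulr_sumr; under eq_bigr do rewrite mulrA.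
rewrite -mean_fitness_vertex !quadE -sumrB; apply: le_trans (ler_norm_sum _ _ _) _.
apply: (@le_trans _ _ (\sum_k \sum_l 3 * d * `|A k l|)); last first.
  under eq_bigr do rewrite -mulr_sumr.
  by rewrite -mulr_sumr ler_wpM2l ?mulr_ge0 // /payoff_scale lerDr.
apply: ler_sum => k _; rewrite -sumrB; apply: le_trans (ler_norm_sum _ _ _) _.
apply: ler_sum => l _; rewrite -mulrBl normrM ler_wpM2r //.
have -> : x k * x l - v k * v l = x k * (x l - v l) + v l * (x k - v k) by ring.
apply: le_trans (ler_normD _ _) _; rewrite !normrM.
have := ler_pM (normr_ge0 _) (normr_ge0 _) (x_le2 k) (x_near l).
have := ler_pM (normr_ge0 _) (normr_ge0 _) (vertex_le1 l) (x_near k).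
lra.
Qed.

Lemma mean_fitness_bound x : (forall i, `|x i - v i| <= 1) -> `|mean_fitness x| <= 4 * K.
Proof.
move=> x_near; have := mean_fitness_near (lexx 1) x_near; have := entry_abs_le istar istar.
have := ler_normD (mean_fitness x - A istar istar) (A istar istar).
rewrite subrK; lra.
Qed.

Lemma ESS_gap : ESS A istar ->
  exists2 c, 0 < c & forall j, j != istar -> A j istar + c <= A istar istar.
Proof.
move=> ess.
have gap_near j : \forall c \near 0^'+, j != istar -> A j istar + c <= A istar istar.
  have [->|j_ne] := eqVneq j istar; first exact: nearW.
  have /nbhs_right_lt : 0 < A istar istar - A j istar by rewrite subr_gt0 ess.
  by apply: filterS => c c_lt _; rewrite -lerBrDl ltW.
have [c [c_gt0 c_gap]] := filter_ex (filterI (nbhs_right_gt 0) (filter_forall _ gap_near)).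
by exists c.
Qed.

(* With [d K <= c / 8] the errors on fitness and mean fitness add up to at most [c / 2]. *)
Lemma selection_near_vertex c x d j : 0 < c ->
  (forall j, j != istar -> A j istar + c <= A istar istar) ->
  d <= Num.min 1 (c / (8 * K)) -> (forall i, `|x i - v i| <= d) ->
  j != istar -> fitness x j - mean_fitness x <= - (c / 2).
Proof.
move=> c_gt0 gap; rewrite le_min => /andP[d_le1 d_le] x_near j_ne.
have K_gt0 := payoff_scale_gt0.
have dK_le : d * K <= c / 8.
  by move: d_le; rewrite !ler_pdivlMr ?mulr_gt0 // mulrAC mulrA.
have := fitness_near j x_near; have := mean_fitness_near d_le1 x_near; have := gap j j_ne.
rewrite !ler_norml => ? /andP[mean_lo _] /andP[_ fit_hi]; lra.
Qed.

Lemma near_vertex_of_mass x e : 0 < e -> \sum_i x i = 1 ->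
  (forall i, i != istar -> `|x i| < e / #|I|.+1%:R) -> forall i, `|x i - v i| < e.
Proof.
move=> e_gt0 x_sum1 x_small.
have en_le : e / #|I|.+1%:R <= e.
  by rewrite ler_pdivrMr ?ltr0n // ler_pMr // ler1n.
move=> i; have [->|i_ne] := eqVneq i istar; last first.
  by rewrite /vertex (negbTE i_ne) subr0; apply: lt_le_trans en_le; exact: x_small.
have -> : x istar - v istar = - \sum_(i | i != istar) x i.
  by rewrite /vertex eqxx -x_sum1 (bigD1 istar) //= opprD addrA subrr add0r.
rewrite normrN; apply: le_lt_trans (ler_norm_sum _ _ _) _.
apply: (@le_lt_trans _ _ (\sum_(i : I) e / #|I|.+1%:R)).
  rewrite big_mkcond /=; apply: ler_sum => j _.
  by case: ifP => [j_ne|_]; [exact/ltW/x_small | rewrite divr_ge0 ?ltW].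
by rewrite sumr_const -[X in X < _]mulr_natr mulrAC ltr_pdivrMr ?ltr0n // ltr_pM2l // ltr_nat.
Qed.

End ReplicatorNearVertex.

Lemma ler_norm_sqr (R : realDomainType) (x y : R) : (`|x| <= `|y|) = (x ^+ 2 <= y ^+ 2).
Proof. by rewrite -(ler_pXn2r (n := 2)) ?nnegrE ?normr_ge0 // !real_normK ?num_real. Qed.

Lemma ltr_norm_sqr (R : realDomainType) (x y : R) : (`|x| < `|y|) = (x ^+ 2 < y ^+ 2).
Proof. by rewrite -(ltr_pXn2r (n := 2)) ?nnegrE ?normr_ge0 // !real_normK ?num_real. Qed.

Section RealCalculus.
Variable R : realType.

Lemma is_derive_sum_fin (I : finType) (F : I -> R -> R) (dF : I -> R) (t : R) :
  (forall i, is_derive t 1 (F i) (dF i)) ->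
  is_derive t 1 (fun s => \sum_i F i s) (\sum_i dF i).
Proof.
move=> F_der; have -> : (fun s => \sum_i F i s) = \sum_i F i.
  by apply/funext => s; rewrite fct_sumE.
by elim/big_ind2 : _ => // [|f df g dg]; [exact: is_derive_cst | exact: is_deriveD].
Qed.

Lemma is_derive_sqr (f : R -> R) (t df : R) :
  is_derive t 1 f df -> is_derive t 1 (fun s => f s ^+ 2) (2 * f t * df).
Proof.
move=> f_der; apply: (is_derive_eq (is_deriveM f_der f_der)).
by rewrite /GRing.scale /=; ring.
Qed.

Lemma is_derive_expRM (c t : R) :
  is_derive t 1 (fun s => expR (c * s)) (c * expR (c * t)).
Proof.
have lin : is_derive t 1 (fun s => c * s) c.
  by apply: (is_derive_eq (is_deriveZ c (@is_derive_id _ _ t 1))); rewrite /GRing.scale /= mulr1.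
by apply: (is_derive_eq (is_derive1_comp (is_derive_expR (c * t)) lin)); rewrite mulrC.
Qed.

Lemma derive_le0_nonincr (f df : R -> R) (a b : R) : a <= b ->
  (forall t : R, is_derive t 1 f (df t)) -> (forall t, a < t -> t < b -> df t <= 0) ->
  f b <= f a.
Proof.
move=> ab f_der df_le0.
have f_dvb (t : R) : derivable f t 1 by exact: ex_derive.
apply: (@ler0_derive1_le_cc R f a b) => //.
- by move=> t; rewrite in_itv /= => /andP[a_lt lt_b]; rewrite derive1E derive_val df_le0.
- by apply: derivable_within_continuous => t _.
- by rewrite in_itv /= lexx ab.
- by rewrite in_itv /= lexx ab.
Qed.

Lemma continuous_induction (G : R -> Prop) :
  G 0 ->
  (forall t, 0 < t -> (forall s, 0 <= s -> s < t -> G s) -> G t) ->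
  (forall t, 0 <= t -> G t -> exists2 eta, 0 < eta & forall s, t <= s -> s < t + eta -> G s) ->
  forall t, 0 <= t -> G t.
Proof.
move=> G0 G_left G_right t1 t1_ge0; apply: contrapT => not_Gt1.
pose B := [set t : R | 0 <= t /\ forall s, 0 <= s -> s <= t -> G s].
have B0 : B 0 by split=> // s s_ge0 s_le0; have -> : s = 0 by apply/eqP; rewrite eq_le s_le0.
have B_ub : ubound B t1.
  move=> b [b_ge0 Gb]; rewrite leNgt; apply/negP => b_gt.
  by apply: not_Gt1; apply: Gb => //; exact: ltW.
have B_sup : has_sup B by split; [exists 0 | exists t1].
set sg := sup B.
have sg_ge0 : 0 <= sg by apply: sup_upper_bound.
have G_below s : 0 <= s -> s < sg -> G s.
  move=> s_ge0 s_lt; have gap : 0 < sg - s by rewrite subr_gt0.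
  have [b [_ Gb] b_gt] := sup_adherent gap B_sup.
  by apply: Gb => //; move: b_gt; rewrite /sg opprB addrCA subrr addr0 => /ltW.
have G_sg : G sg.
  have [->//|sg_neq0] := eqVneq sg 0.
  by apply: G_left => //; rewrite lt_neqAle eq_sym sg_neq0.
have [eta eta_gt0 G_after] := G_right sg sg_ge0 G_sg.
have : B (sg + eta / 2).
  split=> [|s s_ge0 s_le]; first by rewrite addr_ge0 // divr_ge0 // ltW.
  have [/G_below|sg_le] := ltP s sg; first exact.
  apply: G_after => //; apply: le_lt_trans s_le _.
  by rewrite ltrD2l ltr_pdivrMr // ltr_pMr // ltr1n.
move/(sup_upper_bound B_sup); apply/negP; rewrite -ltNge ltrDl divr_gt0 //.
Qed.

Lemma expR_neg_lt (c r t : R) : 0 < c -> 0 < r -> (c * r)^-1 <= t -> expR (- c * t) < r.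
Proof.
move=> c_gt0 r_gt0 t_ge.
have r_inv_le : r^-1 <= c * t.
  by rewrite -ler_pdivrMl // -invfM.
rewrite (mulNr c t) expRN -[r]invrK ltf_pV2 ?posrE ?expR_gt0 ?invr_gt0 //.
by apply: le_lt_trans r_inv_le _; apply: lt_le_trans (expR_ge1Dx _); rewrite ltrDr.
Qed.

End RealCalculus.

Section ReplicatorFlow.
Variables (R : realType) (I : finType) (A : I -> I -> R) (istar : I) (sol : R -> I -> R).
Hypothesis sol_repl : repl_solution A sol.
Local Notation v := (vertex R istar).
Local Notation K := (payoff_scale A).
Local Notation growth t i := (fitness A (sol t) i - mean_fitness A (sol t)).

Lemma is_derive_sol i (t : R) : is_derive t 1 (fun s => sol s i) (sol t i * growth t i).
Proof. exact: sol_repl. Qed.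

Lemma total_mass_conserved (B t : R) : 0 <= t -> \sum_i sol 0 i = 1 ->
  (forall s, 0 < s -> s < t -> `|mean_fitness A (sol s)| <= B) -> \sum_i sol t i = 1.
Proof.
move=> t_ge0 mass0 mean_le.
pose defect s := 1 - \sum_i sol s i.
have defect_der (s : R) : is_derive s 1 defect (- (defect s * mean_fitness A (sol s))).
  apply: (is_derive_eq (is_deriveB (is_derive_cst (1 : R) s 1)
                                    (is_derive_sum_fin (fun i => is_derive_sol i s)))).
  rewrite sub0r /defect mulrBl mul1r mulr_suml -sumrB; congr (- _); apply: eq_bigr => i _.
  by rewrite mulrBr.
(* Gronwall: the weight [expR (- 2 B s)] dominates the growth rate
   [- 2 mean_fitness] of the squared defect. *)
pose W s := defect s ^+ 2 * expR (- (2 * B) * s).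
have W_der (s : R) : is_derive s 1 W
    (- (2 * defect s ^+ 2 * expR (- (2 * B) * s) * (mean_fitness A (sol s) + B))).
  apply: (is_derive_eq (is_deriveM (is_derive_sqr (defect_der s)) (is_derive_expRM _ s))).
  by rewrite /GRing.scale /=; ring.
have := derive_le0_nonincr t_ge0 W_der.
have /[swap]/[apply] : forall s, 0 < s -> s < t ->
    - (2 * defect s ^+ 2 * expR (- (2 * B) * s) * (mean_fitness A (sol s) + B)) <= 0.
  move=> s s_gt0 s_lt; have := mean_le s s_gt0 s_lt; rewrite ler_norml => /andP[mean_ge _].
  rewrite oppr_le0 mulr_ge0 //; last by lra.
  by rewrite mulr_ge0 ?expR_ge0 // mulr_ge0 // sqr_ge0.
rewrite /W /defect mass0 subrr expr0n /= mul0r pmulr_lle0 ?expR_gt0 // => sq_le0.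
by apply/eqP; rewrite eq_sym -subr_eq0 -sqrf_eq0 eq_le sq_le0 sqr_ge0.
Qed.

Lemma sqr_sol_decay i (c t : R) : 0 <= t ->
  (forall s, 0 < s -> s < t -> growth s i <= - (c / 2)) ->
  sol t i ^+ 2 <= sol 0 i ^+ 2 * expR (- c * t).
Proof.
move=> t_ge0 growth_le.
pose W s := sol s i ^+ 2 * expR (c * s).
have W_der (s : R) : is_derive s 1 W (sol s i ^+ 2 * expR (c * s) * (2 * growth s i + c)).
  apply: (is_derive_eq (is_deriveM (is_derive_sqr (is_derive_sol i s)) (is_derive_expRM c s))).
  by rewrite /GRing.scale /=; ring.
have := derive_le0_nonincr t_ge0 W_der.
have /[swap]/[apply] : forall s, 0 < s -> s < t ->
    sol s i ^+ 2 * expR (c * s) * (2 * growth s i + c) <= 0.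
  move=> s s_gt0 s_lt; have := growth_le s s_gt0 s_lt => g_le.
  by apply: mulr_ge0_le0; [rewrite mulr_ge0 ?expR_ge0 // sqr_ge0 | lra].
rewrite /W mulr0 expR0 mulr1 -(ler_pM2r (expR_gt0 (- c * t))) -mulrA -expRD.
by rewrite (mulNr c t) subrr expR0 mulr1.
Qed.

Variables (c delta : R).
Hypotheses (c_gt0 : 0 < c) (ess_gap : forall j, j != istar -> A j istar + c <= A istar istar).
Hypotheses (delta_gt0 : 0 < delta) (delta_le : delta <= Num.min 1 (c / (8 * K))).
Hypothesis sol0_simplex : in_simplex (sol 0).

Lemma decay_while_near t : 0 <= t ->
  (forall s, 0 < s -> s < t -> forall i, `|sol s i - v i| <= delta) ->
  \sum_i sol t i = 1 /\ forall i, i != istar -> sol t i ^+ 2 <= sol 0 i ^+ 2 * expR (- c * t).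
Proof.
move=> t_ge0 near_s; have delta_le1 : delta <= 1 by move: delta_le; rewrite le_min => /andP[].
split=> [|i i_ne].
  apply: (total_mass_conserved (B := 4 * K)) => // [|s s_gt0 s_lt]; first by case: sol0_simplex.
  by apply: mean_fitness_bound => i; apply: le_trans (near_s s s_gt0 s_lt i) delta_le1.
apply: sqr_sol_decay => // s s_gt0 s_lt.
exact: selection_near_vertex c_gt0 ess_gap delta_le (near_s s s_gt0 s_lt) i_ne.
Qed.

Lemma stays_near_vertex : (forall i, `|sol 0 i - v i| < delta / #|I|.+1%:R) ->
  forall t, 0 <= t -> forall i, `|sol t i - v i| < delta.
Proof.
move=> near0; have delta_small : delta / #|I|.+1%:R <= delta.
  by rewrite ler_pdivrMr ?ltr0n // ler_pMr // ler1n.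
apply: continuous_induction => [i|t t_gt0 near_before|t t_ge0 near_t].
- exact: lt_le_trans (near0 i) delta_small.
- have [mass_t decay_t] := decay_while_near (ltW t_gt0)
    (fun s s_gt0 s_lt i => ltW (near_before s (ltW s_gt0) s_lt i)).
  apply: near_vertex_of_mass => // i i_ne.
  have := near0 i; rewrite /vertex (negbTE i_ne) !subr0; apply: le_lt_trans.
  rewrite ler_norm_sqr; apply: le_trans (decay_t i i_ne) _.
  by rewrite ler_piMr ?sqr_ge0 // expR_le1 (mulNr c t) oppr_le0 mulr_ge0 // ltW.
- have near_i i : \forall s \near t, `|sol s i - v i| < delta.
    have sol_cont : {for t, continuous (fun s => sol s i)}.
      exact/differentiable_continuous/derivable1_diffP/ex_derive/is_derive_sol.
    have margin : 0 < delta - `|sol t i - v i| by rewrite subr_gt0.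
    move: sol_cont => /cvgr_distC_lt /(_ _ margin); apply: filterS => s close_s.
    rewrite -(subrK (sol t i) (sol s i)) -addrA.
    by apply: le_lt_trans (ler_normD _ _) _; rewrite -ltrBrDr.
  have [eta /= eta_gt0 near_ball] := (nbhs_normP _ _).1 (filter_forall _ near_i).
  exists eta => // s t_le s_lt; apply: near_ball.
  by rewrite /= distrC ger0_norm ?subr_ge0 // ltrBlDl.
Qed.

Lemma converges_to_vertex : (forall i, `|sol 0 i - v i| < delta / #|I|.+1%:R) ->
  forall i (e : R), 0 < e -> exists M, forall t, M <= t -> `|sol t i - v i| < e.
Proof.
move=> near0 i e e_gt0.
have near_forever := stays_near_vertex near0.
have delta_le1 : delta <= 1 by move: delta_le; rewrite le_min => /andP[].
have en_gt0 : 0 < e / #|I|.+1%:R by rewrite divr_gt0.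
set r := (e / #|I|.+1%:R) ^+ 2.
have r_gt0 : 0 < r by rewrite exprn_gt0.
exists (Num.max 0 (c * r)^-1) => t; rewrite ge_max => /andP[t_ge0 t_ge].
have [mass_t decay_t] :=
  decay_while_near t_ge0 (fun s s_gt0 _ j => ltW (near_forever s (ltW s_gt0) j)).
apply: near_vertex_of_mass => // j j_ne.
have sol0_sqr_le1 : sol 0 j ^+ 2 <= 1.
  rewrite -(expr1n _ 2) -ler_norm_sqr normr1; apply/ltW/lt_le_trans/delta_le1.
  have := near0 j; rewrite /vertex (negbTE j_ne) subr0 => /lt_le_trans; apply.
  by rewrite ler_pdivrMr ?ltr0n // ler_pMr // ler1n.
rewrite -[X in _ < X]ger0_norm ?ltW // ltr_norm_sqr; apply: le_lt_trans (decay_t j j_ne) _.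
apply: le_lt_trans (expR_neg_lt c_gt0 r_gt0 t_ge).
by rewrite ler_piMl ?expR_ge0.
Qed.

End ReplicatorFlow.

Theorem theorem4p7 (R : realType) (T Rw P S : R) (I : finType)
  (p : I -> outcome -> R) (x0 : I -> R) (istar : I) :
  is_PD T Rw P S ->
  (forall i, mem1_vec (p i)) ->
  (forall i, prob (x0 i)) ->
  good T Rw P S (p istar) ->
  x0 istar = 1 ->
  (forall j, j != istar -> ~ agreeable (p j)) ->
  ESS (payoff_matrix T Rw P S p x0) istar /\
  attractor (payoff_matrix T Rw P S p x0) (vertex R istar).
Proof.
move=> PD p_prob x0_prob pstar_good x0_coop others_disagree.
set A := payoff_matrix T Rw P S p x0.
have ess : ESS A istar.
  move=> j j_ne; rewrite /A payoff_agreeable_self //; last exact: pstar_good.1.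
  exact: payoff_against_good (others_disagree j j_ne).
split=> //; have [c c_gt0 gap] := ESS_gap ess.
set delta := Num.min 1 (c / (8 * payoff_scale A)).
have delta_gt0 : 0 < delta by rewrite lt_min ltr01 divr_gt0 // mulr_gt0 // payoff_scale_gt0.
split; [exact: vertex_in_simplex | exact: repl_field_vertex | move=> e e_gt0 |].
- have d_gt0 : 0 < Num.min e delta by rewrite lt_min e_gt0.
  have d_le : Num.min e delta <= delta by rewrite ge_min lexx orbT.
  exists (Num.min e delta / #|I|.+1%:R); split=> [|sol sol_repl sol0 near0 t t_ge0 i].
    by rewrite divr_gt0.
  apply: lt_le_trans (stays_near_vertex sol_repl c_gt0 gap d_gt0 d_le sol0 near0 t_ge0 i) _.
  by rewrite ge_min lexx.
- exists (delta / #|I|.+1%:R); split=> [|sol sol_repl sol0 near0]; first by rewrite divr_gt0.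
  exact: (converges_to_vertex sol_repl c_gt0 gap delta_gt0 (lexx _) sol0 near0).
Qed.
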